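(* Let $h>0$ and let $f_i, d_i, P_i, Q_i$ be real numbers with $P_i$ and $Q_i$ nonzero and of the same sign, i.e. $P_iQ_i>0$. For $k\in[0,1]$ define $$R(k) = f_i + d_i h k + \frac{P_i^2 k^2}{Q_i + (P_i - Q_i)k},\qquad C(k) = f_i + d_i h k + (2P_i - Q_i)k^2 + (Q_i - P_i)k^3,$$ and, for a weighting parameter $\alpha\in[0,1]$, $$F_\alpha(k) = \alpha R(k) + (1-\alpha) C(k),$$ regarded as a function of $x = x_i + kh$, so that $\partial^2 F_\alpha/\partial x^2 = h^{-2}\, d^2F_\alpha/dk^2$. Set $$M_i = \max\Big[2,\ \max\Big(\frac{Q_i}{P_i}, \frac{P_i}{Q_i}\Big)\Big],\qquad \alpha^* = \frac{M_i(M_i-2)}{M_i(M_i-2)+1}.$$ Then $\alpha^*\in[0,1)$, and for $\alpha\in[0,1]$ the interpolant $F_\alpha$ preserves the convexity of the data on the cell, i.e. $$\frac{\partial^2 F_\alpha(k)}{\partial x^2}\le 0 \text{ for all } k\in[0,1] \text{ when } P_i<0,\ Q_i<0,\qquad \frac{\partial^2 F_\alpha(k)}{\partial x^2}\ge 0 \text{ for all } k\in[0,1] \text{ when } P_i>0,\ Q_i>0,$$ if and only if $\alpha\ge\alpha^*$. In particular, $\alpha^*$ is the smallest such weighting parameter, and $\alpha^*=0$ (the purely cubic interpolant is convexity preserving) whenever $1/2\le Q_i/P_i\le 2$.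
   Context: This concerns a semi-Lagrangian (CIP-type) scheme for the 1D advection equation $f_t + u f_x = 0$ on a uniform grid of spacing $h$. On a cell $[x_i,x_{i+1}]$, $f_i, f_{i+1}$ are the values of the quantity and $d_i, d_{i+1}$ its first spatial derivatives at the grid points; $S_i=(f_{i+1}-f_i)/h$, $P_i=(S_i-d_i)h$, $Q_i=(d_{i+1}-S_i)h$. The data are convex on the cell when $d_i>S_i>d_{i+1}$ (i.e. $P_i<0,\ Q_i<0$) and concave when $d_i<S_i<d_{i+1}$ (i.e. $P_i>0,\ Q_i>0$). $k=-u_i\Delta t/h\in[0,1]$ is the local Courant number. $R$ is the rational (cubic-rational) interpolant and $C$ is the Hermite cubic interpolant; both match $f_i, f_{i+1}, d_i, d_{i+1}$ at the cell ends. The denominator $Q_i+(P_i-Q_i)k$ of $R$ does not vanish for $k\in[0,1]$ when $P_iQ_i>0$. *)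

From Stdlib Require Import Reals Lra.
From Coquelicot Require Import Coquelicot.
Open Scope R_scope.

Definition Rinterp (h f d P Q : R) (k : R) : R :=
  f + d * h * k + (P ^ 2 * k ^ 2) / (Q + (P - Q) * k).

Definition Cinterp (h f d P Q : R) (k : R) : R :=
  f + d * h * k + (2 * P - Q) * k ^ 2 + (Q - P) * k ^ 3.

Definition Finterp (alpha h f d P Q : R) (k : R) : R :=
  alpha * Rinterp h f d P Q k + (1 - alpha) * Cinterp h f d P Q k.

Definition d2Fdx2 (alpha h f d P Q : R) (k : R) : R :=
  / (h ^ 2) * Derive_n (Finterp alpha h f d P Q) 2 k.

Definition Mi (P Q : R) : R := Rmax 2 (Rmax (Q / P) (P / Q)).

Definition alpha_star (P Q : R) : R :=
  Mi P Q * (Mi P Q - 2) / (Mi P Q * (Mi P Q - 2) + 1).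

Definition convexity_preserving (alpha h f d P Q : R) : Prop :=
  (P < 0 /\ Q < 0 -> forall k, 0 <= k <= 1 -> d2Fdx2 alpha h f d P Q k <= 0) /\
  (P > 0 /\ Q > 0 -> forall k, 0 <= k <= 1 -> d2Fdx2 alpha h f d P Q k >= 0).

(** For [0 < P <= Q] the second [k]-derivative of [F_alpha] is nondecreasing
    on [[0, 1]], so it is nonnegative there iff it is at [k = 0]; with
    [r = Q / P >= 1] that value has the sign of [alpha (r - 1)^2 - r (r - 2)],
    and [(r - 1)^2 = r (r - 2) + 1] turns its nonnegativity into
    [alpha >= alpha*] with [M = max 2 r].  Swapping [P] and [Q] reflects the
    cell ([k -> 1 - k]), which covers [Q <= P], and changing the signs of [P]
    and [Q] negates the derivative, which covers concave data. *)
From Stdlib Require Import Reals Lra Psatz.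
From Coquelicot Require Import Coquelicot.
Open Scope R_scope.

Definition Finterp_dk (alpha h d P Q k : R) : R :=
  alpha * (d * h + P ^ 2 * (2 * Q * k + (P - Q) * k ^ 2) / (Q + (P - Q) * k) ^ 2)
  + (1 - alpha) * (d * h + 2 * (2 * P - Q) * k + 3 * (Q - P) * k ^ 2).

Definition Finterp_dkk (alpha P Q k : R) : R :=
  2 * alpha * P ^ 2 * Q ^ 2 / (Q + (P - Q) * k) ^ 3
  + (1 - alpha) * (2 * (2 * P - Q) + 6 * (Q - P) * k).

Lemma is_derive_Finterp alpha h f d P Q k : Q + (P - Q) * k <> 0 ->
  is_derive (Finterp alpha h f d P Q) k (Finterp_dk alpha h d P Q k).
Proof.
  intros Hk. unfold Finterp, Rinterp, Cinterp, Finterp_dk.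
  auto_derive; [auto | field; exact Hk].
Qed.

Lemma is_derive_Finterp_dk alpha h d P Q k : Q + (P - Q) * k <> 0 ->
  is_derive (Finterp_dk alpha h d P Q) k (Finterp_dkk alpha P Q k).
Proof.
  intros Hk. unfold Finterp_dk, Finterp_dkk.
  auto_derive; [auto | field; exact Hk].
Qed.

Lemma locally_neq0_continuous (g : R -> R) k :
  continuous g k -> g k <> 0 -> locally k (fun t => g t <> 0).
Proof. intros Hg Hk. apply (Hg (fun u => u <> 0)), open_neq, Hk. Qed.

Lemma Derive_n_Finterp_2 alpha h f d P Q k : Q + (P - Q) * k <> 0 ->
  Derive_n (Finterp alpha h f d P Q) 2 k = Finterp_dkk alpha P Q k.
Proof.
  intros Hk. simpl.
  rewrite (Derive_ext_loc _ (Finterp_dk alpha h d P Q)).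
  - apply is_derive_unique, is_derive_Finterp_dk, Hk.
  - assert (Hloc : locally k (fun t => Q + (P - Q) * t <> 0)).
    { apply (locally_neq0_continuous (fun t => Q + (P - Q) * t)); [|exact Hk].
      apply (ex_derive_continuous (fun t => Q + (P - Q) * t)). auto_derive. exact I. }
    revert Hloc. apply filter_imp. intros t Ht.
    apply is_derive_unique, is_derive_Finterp, Ht.
Qed.

Lemma d2Fdx2_eq alpha h f d P Q k : Q + (P - Q) * k <> 0 ->
  d2Fdx2 alpha h f d P Q k = / h ^ 2 * Finterp_dkk alpha P Q k.
Proof. intros Hk. unfold d2Fdx2. rewrite Derive_n_Finterp_2 by exact Hk. reflexivity. Qed.

Lemma Finterp_dkk_reflect alpha P Q k :
  Finterp_dkk alpha P Q k = Finterp_dkk alpha Q P (1 - k).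
Proof.
  unfold Finterp_dkk.
  replace (P + (Q - P) * (1 - k)) with (Q + (P - Q) * k) by ring.
  unfold Rdiv. ring.
Qed.

Lemma Finterp_dkk_opp alpha P Q k : Q + (P - Q) * k <> 0 ->
  Finterp_dkk alpha (- P) (- Q) k = - Finterp_dkk alpha P Q k.
Proof.
  intros Hk. unfold Finterp_dkk.
  replace (- Q + (- P - - Q) * k) with (- (Q + (P - Q) * k)) by ring.
  field. exact Hk.
Qed.

Lemma Finterp_dkk_0 alpha P Q : 0 < P -> 0 < Q ->
  Finterp_dkk alpha P Q 0
  = 2 * P / (Q / P) * (alpha * (Q / P - 1) ^ 2 - Q / P * (Q / P - 2)).
Proof. intros HP HQ. unfold Finterp_dkk. field. lra. Qed.

(* Both terms grow with [k]: the denominator [Q + (P - Q) k] shrinks from [Q] to [P]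
   and the linear part has slope [6 (1 - alpha) (Q - P) >= 0]. *)
Lemma Finterp_dkk_ge_at_0 alpha P Q k : 0 <= alpha <= 1 -> 0 < P <= Q ->
  0 <= k <= 1 -> Finterp_dkk alpha P Q 0 <= Finterp_dkk alpha P Q k.
Proof.
  intros Ha HPQ Hk. unfold Finterp_dkk.
  replace (Q + (P - Q) * 0) with Q by ring.
  assert (HD : 0 < Q + (P - Q) * k <= Q) by nra.
  assert (Hinv : / Q ^ 3 <= / (Q + (P - Q) * k) ^ 3).
  { apply Rinv_le_contravar; [apply pow_lt; lra | apply pow_incr; lra]. }
  assert (Hc : 0 <= 2 * alpha * P ^ 2 * Q ^ 2).
  { assert (0 <= P ^ 2 * Q ^ 2) by (apply Rmult_le_pos; apply pow2_ge_0). nra. }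
  assert (Hlin : 0 <= (1 - alpha) * ((Q - P) * k)) by (apply Rmult_le_pos; nra).
  unfold Rdiv. pose proof (Rmult_le_compat_l _ _ _ Hc Hinv). nra.
Qed.

Lemma Mi_ge2 P Q : 2 <= Mi P Q.
Proof. apply Rmax_l. Qed.

Lemma Mi_comm P Q : Mi P Q = Mi Q P.
Proof. unfold Mi. rewrite (Rmax_comm (P / Q)). reflexivity. Qed.

Lemma Mi_opp P Q : P <> 0 -> Q <> 0 -> Mi (- P) (- Q) = Mi P Q.
Proof.
  intros HP HQ. unfold Mi.
  replace (- Q / - P) with (Q / P) by (field; exact HP).
  replace (- P / - Q) with (P / Q) by (field; exact HQ).
  reflexivity.
Qed.

Lemma Mi_of_le P Q : 0 < P <= Q -> Mi P Q = Rmax 2 (Q / P).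
Proof.
  intros HPQ. unfold Mi. f_equal. apply Rmax_left.
  apply Rle_trans with 1.
  - apply Rle_div_l; lra.
  - apply Rle_div_r; lra.
Qed.

Lemma alpha_star_ge0 P Q : 0 <= alpha_star P Q.
Proof.
  pose proof (Mi_ge2 P Q). unfold alpha_star.
  apply Rdiv_le_0_compat; nra.
Qed.

Lemma alpha_star_lt1 P Q : alpha_star P Q < 1.
Proof.
  pose proof (Mi_ge2 P Q). unfold alpha_star.
  apply Rlt_div_l; nra.
Qed.

Lemma alpha_star_comm P Q : alpha_star P Q = alpha_star Q P.
Proof. unfold alpha_star. rewrite Mi_comm. reflexivity. Qed.

Lemma alpha_star_opp P Q : P <> 0 -> Q <> 0 -> alpha_star (- P) (- Q) = alpha_star P Q.
Proof. intros HP HQ. unfold alpha_star. rewrite Mi_opp by assumption. reflexivity. Qed.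

Lemma alpha_star_le_iff alpha P Q :
  alpha_star P Q <= alpha <->
  Mi P Q * (Mi P Q - 2) <= alpha * (Mi P Q * (Mi P Q - 2) + 1).
Proof.
  pose proof (Mi_ge2 P Q). unfold alpha_star.
  split; intros H'.
  - apply Rle_div_l in H'; nra.
  - apply Rle_div_l; nra.
Qed.

(* For [r < 2] the quantity [r (r - 2)] is negative, and [M = 2] makes
   [M (M - 2) = 0]: in both cases the constraint on [alpha] is void. *)
Lemma alpha_star_le_iff_ratio alpha P Q : 0 <= alpha -> 0 < P <= Q ->
  alpha_star P Q <= alpha <->
  Q / P * (Q / P - 2) <= alpha * (Q / P - 1) ^ 2.
Proof.
  intros Ha HPQ. rewrite alpha_star_le_iff, Mi_of_le by exact HPQ.
  assert (Hr : 1 <= Q / P) by (apply Rle_div_r; lra).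
  set (r := Q / P) in *. unfold Rmax. destruct (Rle_dec 2 r) as [H2 | H2].
  - replace ((r - 1) ^ 2) with (r * (r - 2) + 1) by ring. reflexivity.
  - apply Rnot_le_lt in H2.
    assert (0 <= alpha * (r - 1) ^ 2) by (apply Rmult_le_pos; [lra | apply pow2_ge_0]).
    split; intros; nra.
Qed.

Lemma Finterp_dkk_nonneg_iff_le alpha P Q : 0 <= alpha <= 1 -> 0 < P <= Q ->
  (forall k, 0 <= k <= 1 -> Finterp_dkk alpha P Q k >= 0) <->
  alpha_star P Q <= alpha.
Proof.
  intros Ha HPQ.
  rewrite alpha_star_le_iff_ratio by lra.
  assert (Hscale : 0 < 2 * P / (Q / P)).
  { apply Rdiv_lt_0_compat; [lra | apply Rdiv_lt_0_compat; lra]. }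
  split.
  - intros Hk. specialize (Hk 0 ltac:(lra)).
    rewrite Finterp_dkk_0 in Hk by lra.
    destruct (Rle_dec (Q / P * (Q / P - 2)) (alpha * (Q / P - 1) ^ 2)); nra.
  - intros Hr k Hk. apply Rle_ge.
    apply Rle_trans with (Finterp_dkk alpha P Q 0).
    + rewrite Finterp_dkk_0 by lra. nra.
    + apply Finterp_dkk_ge_at_0; assumption.
Qed.

Lemma Finterp_dkk_nonneg_iff alpha P Q : 0 <= alpha <= 1 -> 0 < P -> 0 < Q ->
  (forall k, 0 <= k <= 1 -> Finterp_dkk alpha P Q k >= 0) <->
  alpha_star P Q <= alpha.
Proof.
  intros Ha HP HQ. destruct (Rle_dec P Q) as [HPQ | HQP].
  - apply Finterp_dkk_nonneg_iff_le; lra.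
  - rewrite alpha_star_comm, <- Finterp_dkk_nonneg_iff_le by lra.
    split; intros H k Hk; rewrite Finterp_dkk_reflect;
      [|replace k with (1 - (1 - k)) by ring]; apply H; lra.
Qed.

Lemma convexity_preserving_pos alpha h f d P Q : 0 < h -> 0 < P -> 0 < Q ->
  convexity_preserving alpha h f d P Q <->
  (forall k, 0 <= k <= 1 -> Finterp_dkk alpha P Q k >= 0).
Proof.
  intros Hh HP HQ. assert (Hs : 0 < / h ^ 2) by (apply Rinv_0_lt_compat, pow_lt, Hh).
  unfold convexity_preserving. split.
  - intros [_ Hcvx] k Hk. specialize (Hcvx (conj HP HQ) k Hk).
    rewrite d2Fdx2_eq in Hcvx by nra. nra.
  - intros Hk. split; [lra|]. intros _ k Hk01. specialize (Hk k Hk01).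
    rewrite d2Fdx2_eq by nra. nra.
Qed.

Lemma convexity_preserving_neg alpha h f d P Q : 0 < h -> P < 0 -> Q < 0 ->
  convexity_preserving alpha h f d P Q <->
  (forall k, 0 <= k <= 1 -> Finterp_dkk alpha (- P) (- Q) k >= 0).
Proof.
  intros Hh HP HQ. assert (Hs : 0 < / h ^ 2) by (apply Rinv_0_lt_compat, pow_lt, Hh).
  unfold convexity_preserving. split.
  - intros [Hcvx _] k Hk. specialize (Hcvx (conj HP HQ) k Hk).
    rewrite d2Fdx2_eq in Hcvx by nra. rewrite Finterp_dkk_opp by nra. nra.
  - intros Hk. split; [|lra]. intros _ k Hk01. specialize (Hk k Hk01).
    rewrite Finterp_dkk_opp in Hk by nra.
    rewrite d2Fdx2_eq by nra. nra.
Qed.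

Lemma alpha_star_eq0 P Q : 1 / 2 <= Q / P <= 2 -> alpha_star P Q = 0.
Proof.
  intros Hr. assert (HP : P <> 0) by (intros ->; unfold Rdiv in Hr; rewrite Rinv_0 in Hr; lra).
  assert (HQ : Q <> 0) by (intros ->; unfold Rdiv in Hr; rewrite Rmult_0_l in Hr; lra).
  assert (HPQ : P / Q = / (Q / P)) by (field; auto).
  assert (HPQ2 : P / Q <= 2).
  { rewrite HPQ. apply Rle_trans with (/ (1 / 2)).
    - apply Rinv_le_contravar; lra.
    - right. field. }
  assert (HM : Mi P Q = 2).
  { unfold Mi. apply Rmax_left, Rmax_lub; lra. }
  unfold alpha_star. rewrite HM. field_simplify; lra.
Qed.

Theorem mainTheorem1 (h f d P Q : R) (Hh : 0 < h) (HPQ : P * Q > 0) :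
  (0 <= alpha_star P Q < 1) /\
  (forall alpha, 0 <= alpha <= 1 ->
     (convexity_preserving alpha h f d P Q <-> alpha >= alpha_star P Q)) /\
  (1 / 2 <= Q / P <= 2 -> alpha_star P Q = 0).
Proof.
  split; [|split].
  - split; [apply alpha_star_ge0 | apply alpha_star_lt1].
  - intros alpha Ha.
    assert (Hge : alpha >= alpha_star P Q <-> alpha_star P Q <= alpha) by lra.
    rewrite Hge. destruct (Rmult_pos_cases P Q HPQ) as [[HP HQ] | [HP HQ]].
    + rewrite convexity_preserving_pos by assumption.
      apply Finterp_dkk_nonneg_iff; lra.
    + rewrite convexity_preserving_neg, <- alpha_star_opp by (assumption || lra).
      apply Finterp_dkk_nonneg_iff; lra.
  - apply alpha_star_eq0.
Qed.
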